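(* In the 1SDI setting where Alice measures $A_0=\sigma_x$, $A_1=\sigma_y$, Bob measures $B_0=\sigma_x$, $B_1=\sigma_y$, and Charlie is a black box, the Mermin family $P^V_{MF}$ ($0<V\le1$) demonstrates genuine tripartite steering (i.e. admits no 1SDI steering LHS-LHV model) if and only if $V>\frac1{\sqrt2}$.
   Context: Outcomes and settings: $a,b,c,x,y,z\in\{0,1\}$. For a qubit observable $O$ with eigenvalues $\pm1$, the measurement has projectors $M_0=(\mathbb 1+O)/2$, $M_1=(\mathbb 1-O)/2$; $M^A_{a|x}$, $M^B_{b|y}$ denote the projectors of $A_x$, $B_y$. Mermin family: $P^V_{MF}(abc|xyz)=\frac{1+(-1)^{a\oplus b\oplus c\oplus xy\oplus yz\oplus xz}\,\delta_{x\oplus y\oplus1,z}\,V}{8}$. 1SDI steering LHS-LHV (StLHS) model: $P(abc|xyz)=\sum_\lambda r_\lambda \mathrm{Tr}[(M^A_{a|x}\otimes M^B_{b|y})\rho^\lambda_{AB}]P_\lambda(c|z)+\sum_\lambda p_\lambda \mathrm{Tr}(M^A_{a|x}\rho^\lambda_A)P^Q_\lambda(bc|yz)+\sum_\lambda q_\lambda \mathrm{Tr}(M^B_{b|y}\rho^\lambda_B)P^Q_\lambda(ac|xz)$, with nonnegative weights summing to 1, $\rho^\lambda_{AB}$ two-qubit states, $\rho^\lambda_A,\rho^\lambda_B$ qubit states, $P_\lambda(c|z)$ arbitrary conditional distributions, and $P^Q_\lambda(bc|yz)=\mathrm{Tr}[(M^B_{b|y}\otimes N^\lambda_{c|z})\tau^\lambda_{BC}]$,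 $P^Q_\lambda(ac|xz)=\mathrm{Tr}[(M^A_{a|x}\otimes N^\lambda_{c|z})\tau^\lambda_{AC}]$ for states $\tau^\lambda$ on $\mathbb C^2\otimes\mathbb C^d$ and POVMs $\{N^\lambda_{c|z}\}_c$ on $\mathbb C^d$. A correlation demonstrates genuine tripartite steering in the 1SDI scenario iff it admits no StLHS model. *)

From HB Require Import structures.
From mathcomp Require Import all_boot all_order all_algebra.
Set Implicit Arguments. Unset Strict Implicit. Unset Printing Implicit Defensive.
Import Order.TTheory GRing.Theory Num.Theory.
Local Open Scope ring_scope.

Section QDefs.
Variable C : numClosedFieldType.

Definition dagger m n (A : 'M[C]_(m, n)) : 'M[C]_(n, m) := (map_mx Num.conj A)^T.

Definition psd n (A : 'M[C]_n) : Prop :=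
  dagger A = A /\ forall v : 'cV[C]_n, 0 <= (dagger v *m A *m v) 0 0.

Definition is_state n (rho : 'M[C]_n) : Prop := psd rho /\ \tr rho = 1.

Definition is_povm d (N : bool -> 'M[C]_d) : Prop :=
  (forall c, psd (N c)) /\ N false + N true = 1%:M.

Definition is_cond_distr (P : bool -> bool -> C) : Prop :=
  (forall c z, 0 <= P c z) /\ (forall z, P false z + P true z = 1).

(* Kronecker (tensor) product A (x) B, with the basis of C^m (x) C^n indexed
   by 'I_(m*n) through the standard MathComp bijection used by mxvec *)
Definition tens_idx m n (k : 'I_(m * n)) : 'I_m * 'I_n :=
  enum_val (cast_ord (esym (mxvec_cast m n)) k).

Definition kron m n (A : 'M[C]_m) (B : 'M[C]_n) : 'M[C]_(m * n) :=
  \matrix_(k, l) (A (tens_idx k).1 (tens_idx l).1 * B (tens_idx k).2 (tens_idx l).2).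

Definition sigma_x : 'M[C]_2 := \matrix_(i, j) (if i == j then 0 else 1).
Definition sigma_y : 'M[C]_2 :=
  \matrix_(i, j) (if i == j then 0 else if i == 0 then - 'i else 'i).

Definition proj_of (O : 'M[C]_2) (a : bool) : 'M[C]_2 :=
  2^-1 *: (1%:M + (-1) ^+ a *: O).

Definition obsA (x : bool) : 'M[C]_2 := if x then sigma_y else sigma_x.
Definition obsB (y : bool) : 'M[C]_2 := if y then sigma_y else sigma_x.
Definition MA (a x : bool) : 'M[C]_2 := proj_of (obsA x) a.
Definition MB (b y : bool) : 'M[C]_2 := proj_of (obsB y) b.

Definition mermin (V : C) (a b c x y z : bool) : C :=
  (1 + (-1) ^+ (a (+) b (+) c (+) (x && y) (+) (y && z) (+) (x && z))
       * (((x (+) y (+) true) == z)%:R) * V) / 8.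

(* 1SDI steering LHS-LHV (StLHS) model, finitely many hidden variables *)
Definition StLHS (P : bool -> bool -> bool -> bool -> bool -> bool -> C) : Prop :=
  exists (n1 n2 n3 : nat)
    (r : 'I_n1 -> C) (rhoAB : 'I_n1 -> 'M[C]_(2 * 2)) (PC : 'I_n1 -> bool -> bool -> C)
    (p : 'I_n2 -> C) (rhoA : 'I_n2 -> 'M[C]_2) (dB : 'I_n2 -> nat)
    (tauBC : forall l, 'M[C]_(2 * dB l)) (NB : forall l, bool -> bool -> 'M[C]_(dB l))
    (q : 'I_n3 -> C) (rhoB : 'I_n3 -> 'M[C]_2) (dA : 'I_n3 -> nat)
    (tauAC : forall l, 'M[C]_(2 * dA l)) (NA : forall l, bool -> bool -> 'M[C]_(dA l)),
    [/\ (forall l, 0 <= r l), (forall l, 0 <= p l), (forall l, 0 <= q l)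
        & \sum_l r l + \sum_l p l + \sum_l q l = 1] /\
    [/\ (forall l, is_state (rhoAB l) /\ is_cond_distr (PC l)),
        (forall l, [/\ is_state (rhoA l), is_state (tauBC l)
                     & forall z, is_povm (fun c => NB l c z)]),
        (forall l, [/\ is_state (rhoB l), is_state (tauAC l)
                     & forall z, is_povm (fun c => NA l c z)]) &
        forall a b c x y z,
          P a b c x y z =
            \sum_l r l * \tr (kron (MA a x) (MB b y) *m rhoAB l) * PC l c z
          + \sum_l p l * \tr (MA a x *m rhoA l)
                       * \tr (kron (MB b y) (NB l c z) *m tauBC l)
          + \sum_l q l * \tr (MB b y *m rhoB l)
                       * \tr (kron (MA a x) (NA l c z) *m tauAC l)].

Definition genuine_1SDI_steering (P : bool -> bool -> bool -> bool -> bool -> bool -> C) : Prop :=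
  ~ StLHS P.

End QDefs.

(* The Mermin functional M(P) = E(001) + E(010) + E(100) - E(111), with E(xyz) the
   three-party correlator, equals 4V on the Mermin family.  It is linear, so on a
   StLHS model it is a convex combination of its values on the three kinds of hidden
   states, and each of these is at most 2 sqrt 2.  If Alice and Bob share a two-qubit
   state rho and Charlie is classical, M = w rho_{00,11} + w^* rho_{11,00} where
   w = 2 (g_1 + i g_0) is built from Charlie's correlators g_z; if Alice (or Bob)
   holds a qubit rho, M = <sigma_x> u + <sigma_y> v = w rho_01 + w^* rho_10 with
   w = u + i v and u, v sums or differences of two correlators.  Either way
   |w|^2 <= 8, and positivity of rho gives
   w rho_ij + w^* rho_ji <= c rho_ii + |w|^2 / c rho_jj for c > 0, hence at most
   2 sqrt 2 for c = 2 sqrt 2.  So a model forces 4V <= 2 sqrt 2.  Conversely, for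
   V <= 1/sqrt 2 the uniform mixture of the states (|00> + e^{i phi} |11>)/sqrt 2,
   phi in {+-pi/4, +-3pi/4}, with Charlie answering z = 1 (resp. z = 0) with bias
   2V cos phi (resp. 2V sin phi), reproduces the Mermin family. *)

From HB Require Import structures.
From mathcomp Require Import all_boot all_order all_algebra.
From mathcomp Require Import ring spectral.
Set Implicit Arguments. Unset Strict Implicit. Unset Printing Implicit Defensive.
Import Order.TTheory GRing.Theory Num.Theory.
Local Open Scope ring_scope.

Section Kronecker.
Variable C : numClosedFieldType.

Lemma tens_idx_mxvec m n (i : 'I_m) (j : 'I_n) : tens_idx (mxvec_index i j) = (i, j).
Proof. by rewrite /tens_idx /mxvec_index cast_ordK enum_rankK. Qed.

Lemma kronE m n (A : 'M[C]_m) (B : 'M[C]_n) i j k l :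
  kron A B (mxvec_index i j) (mxvec_index k l) = A i k * B j l.
Proof. by rewrite /kron mxE !tens_idx_mxvec. Qed.

Lemma sum_mxvec_index m n (F : 'I_(m * n) -> C) :
  \sum_k F k = \sum_i \sum_j F (mxvec_index i j).
Proof.
rewrite pair_big /= (reindex (fun p : 'I_m * 'I_n => mxvec_index p.1 p.2)) //=.
exists (@tens_idx m n) => [[i j] _ | k _]; first by rewrite tens_idx_mxvec.
by case/mxvec_indexP: k => i j; rewrite tens_idx_mxvec.
Qed.

Lemma kronDl m n (A A' : 'M[C]_m) (B : 'M[C]_n) : kron (A + A') B = kron A B + kron A' B.
Proof. by apply/matrixP => i j; rewrite !mxE mulrDl. Qed.

Lemma kronDr m n (A : 'M[C]_m) (B B' : 'M[C]_n) : kron A (B + B') = kron A B + kron A B'.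
Proof. by apply/matrixP => i j; rewrite !mxE mulrDr. Qed.

Lemma kronBl m n (A A' : 'M[C]_m) (B : 'M[C]_n) : kron (A - A') B = kron A B - kron A' B.
Proof. by apply/matrixP => i j; rewrite !mxE mulrBl. Qed.

Lemma kronBr m n (A : 'M[C]_m) (B B' : 'M[C]_n) : kron A (B - B') = kron A B - kron A B'.
Proof. by apply/matrixP => i j; rewrite !mxE mulrBr. Qed.

Lemma kronZl m n c (A : 'M[C]_m) (B : 'M[C]_n) : kron (c *: A) B = c *: kron A B.
Proof. by apply/matrixP => i j; rewrite !mxE mulrA. Qed.

Lemma mxvec_index_eq m n (i i' : 'I_m) (j j' : 'I_n) :
  (mxvec_index i j == mxvec_index i' j') = (i == i') && (j == j').
Proof.
apply/eqP/andP => [/(congr1 (@tens_idx m n)) | [/eqP-> /eqP->] //].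
by rewrite !tens_idx_mxvec => -[-> ->].
Qed.

Lemma kron1 m n : kron (1%:M : 'M[C]_m) (1%:M : 'M[C]_n) = 1%:M.
Proof.
apply/matrixP => k l; case/mxvec_indexP: k => i j; case/mxvec_indexP: l => i' j'.
by rewrite kronE !mxE mxvec_index_eq; case: eqP; case: eqP; rewrite ?mulr1 ?mul0r ?mulr0.
Qed.

Lemma sum_ord2 (F : 'I_2 -> C) : \sum_(i < 2) F i = F 0 + F 1.
Proof. by rewrite big_ord_recl big_ord1; congr (_ + F _); apply: val_inj. Qed.

Lemma mxtrace_mulE n (A B : 'M[C]_n) : \tr (A *m B) = \sum_i \sum_j A i j * B j i.
Proof. by apply: eq_bigr => i _; rewrite mxE. Qed.

Lemma mxtrace_kron_mul m n (A : 'M[C]_m) (B : 'M[C]_n) (R : 'M[C]_(m * n)) :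
  \tr (kron A B *m R) = \sum_i \sum_j \sum_k \sum_l
     A i k * B j l * R (mxvec_index k l) (mxvec_index i j).
Proof.
rewrite mxtrace_mulE sum_mxvec_index; apply: eq_bigr => i _; apply: eq_bigr => j _.
by rewrite sum_mxvec_index; apply: eq_bigr => k _; apply: eq_bigr => l _; rewrite kronE.
Qed.

End Kronecker.

Section Positivity.
Variable C : numClosedFieldType.
Implicit Types (c w : C).

Lemma daggerK m n (A : 'M[C]_(m, n)) : dagger (dagger A) = A.
Proof. by apply/matrixP => i j; rewrite !mxE conjCK. Qed.

Lemma dagger_mul m n p (A : 'M[C]_(m, n)) (B : 'M[C]_(n, p)) :
  dagger (A *m B) = dagger B *m dagger A.
Proof. by rewrite /dagger map_mxM trmx_mul. Qed.

Lemma daggerD m n (A B : 'M[C]_(m, n)) : dagger (A + B) = dagger A + dagger B.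
Proof. by apply/matrixP => i j; rewrite !mxE rmorphD. Qed.

Lemma daggerZ m n c (A : 'M[C]_(m, n)) : dagger (c *: A) = c^* *: dagger A.
Proof. by apply/matrixP => i j; rewrite !mxE rmorphM. Qed.

Lemma dagger_delta m n (i : 'I_m) (j : 'I_n) :
  dagger (delta_mx i j : 'M[C]_(m, n)) = delta_mx j i.
Proof.
by apply/matrixP => a b; rewrite !mxE; case: (_ == _); case: (_ == _); rewrite ?conjC1 ?conjC0.
Qed.

Lemma quad_delta n (A : 'M[C]_n) i j :
  ((delta_mx 0 i : 'rV[C]_n) *m A *m (delta_mx j 0 : 'cV[C]_n)) 0 0 = A i j.
Proof. by rewrite -rowE -colE !mxE. Qed.

Lemma quad_delta2 n (A : 'M[C]_n) i j a b
    (v : 'cV[C]_n := a *: delta_mx i 0 + b *: delta_mx j 0) :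
  (dagger v *m A *m v) 0 0 =
    a^* * a * A i i + a^* * b * A i j + b^* * a * A j i + b^* * b * A j j.
Proof.
rewrite /v daggerD !daggerZ !dagger_delta mulmxDl !mulmxDr -!scalemxAl -!scalemxAr.
by rewrite -!rowE -!colE !mxE; ring.
Qed.

Lemma psd_conj n k (A : 'M[C]_n) (M : 'M[C]_(n, k)) :
  psd A -> psd (dagger M *m A *m M).
Proof.
move=> [hA qA]; split; first by rewrite !dagger_mul daggerK hA mulmxA.
by move=> v; have := qA (M *m v); rewrite dagger_mul !mulmxA.
Qed.

Lemma psd_scale n (A : 'M[C]_n) c : 0 <= c -> psd A -> psd (c *: A).
Proof.
move=> c0 [hA qA]; split; first by rewrite daggerZ geC0_conj // hA.
by move=> v; rewrite -scalemxAr -scalemxAl mxE mulr_ge0.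
Qed.

Lemma psd_diag_ge0 n (A : 'M[C]_n) i : psd A -> 0 <= A i i.
Proof. by move=> [_ /(_ (delta_mx i 0))]; rewrite dagger_delta quad_delta. Qed.

Lemma psd_offdiag_le n (A : 'M[C]_n) i j w c : psd A -> 0 < c ->
  w * A i j + w^* * A j i <= c * A i i + w * w^* / c * A j j.
Proof.
move=> [_ /(_ (1 *: delta_mx i 0 + (- w / c) *: delta_mx j 0))] + c_gt0.
have cc : c^* = c by rewrite geC0_conj // ltW.
have cb : (- w / c)^* = - w^* / c by rewrite rmorphM rmorphN fmorphV /= cc.
rewrite quad_delta2 conjC1 cb => q; rewrite -subr_ge0.
have -> : c * A i i + w * w^* / c * A j j - (w * A i j + w^* * A j i) =
  c * (1 * 1 * A i i + 1 * (- w / c) * A i j + (- w^* / c) * 1 * A j i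
       + (- w^* / c) * (- w / c) * A j j).
  by field; rewrite gt_eqF.
by rewrite mulr_ge0 // ltW.
Qed.

Lemma psd_diag_add_le_trace n (A : 'M[C]_n) i j : psd A -> i != j ->
  A i i + A j j <= \tr A.
Proof.
move=> pA ij; rewrite /mxtrace (bigD1 i) //= (bigD1 j) 1?eq_sym //= addrA lerDl.
by apply: sumr_ge0 => k _; apply: psd_diag_ge0.
Qed.

Lemma state_offdiag_le n (R : 'M[C]_n) i j w : is_state R -> i != j ->
  w * w^* <= 8 -> w * R i j + w^* * R j i <= 2 * sqrtC 2.
Proof.
move=> [pR trR] ij ww8; set r := sqrtC 2.
have r_gt0 : 0 < r by rewrite sqrtC_gt0 ltr0n.
have rr : 2 * r * (2 * r) = 8 by rewrite mulrACA -(expr2 r) sqrtCK -!natrM.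
apply: (le_trans (@psd_offdiag_le n R i j w (2 * r) pR _)); first by rewrite mulr_gt0.
have Rii := psd_diag_ge0 i pR; have Rjj := psd_diag_ge0 j pR.
apply: (@le_trans _ _ (2 * r * (R i i + R j j))).
  rewrite mulrDr lerD2l ler_wpM2r // ler_pdivrMr ?mulr_gt0 //.
  by rewrite rr.
rewrite [X in _ <= X](_ : _ = 2 * r * \tr R); last by rewrite trR mulr1.
by rewrite ler_wpM2l ?psd_diag_add_le_trace // mulr_ge0 // ltW.
Qed.

Lemma mxtrace_psd_mul_ge0 n (A B : 'M[C]_n) :
  psd A -> psd B -> 0 <= \tr (A *m B).
Proof.
move=> pA pB; have /orthomx_spectralP : A \is normalmx.
  have hA : map_mx Num.conj A^T = A.
    by case: pA => /matrixP hA _; apply/matrixP => i j; rewrite -hA !mxE.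
  by apply/normalmxP; rewrite hA.
set P := spectralmx A; set d := spectral_diag A.
have dagP : invmx P = dagger P.
  by rewrite invmx_unitary ?spectral_unitarymx //; apply/matrixP => i j; rewrite !mxE.
have PdagP : P *m dagger P = 1%:M by rewrite -dagP mulmxV ?spectral_unit.
rewrite dagP => eA.
have eD : diag_mx d = P *m A *m dagger P.
  by rewrite eA !mulmxA PdagP mul1mx -mulmxA PdagP mulmx1.
have -> : \tr (A *m B) = \tr (diag_mx d *m (P *m B *m dagger P)).
  by rewrite eA -!mulmxA mxtrace_mulC -!mulmxA.
rewrite mul_diag_mx /mxtrace; apply: sumr_ge0 => i _; rewrite mxE.
have := psd_diag_ge0 i (psd_conj (dagger P) pA); rewrite daggerK -eD mxE eqxx mulr1n.
by move=> /mulr_ge0; apply; have := psd_diag_ge0 i (psd_conj (dagger P) pB); rewrite daggerK.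
Qed.

Lemma psd_rank1 n (v : 'cV[C]_n) : psd (v *m dagger v).
Proof.
have psd1 : psd (1%:M : 'M[C]_1).
  split; first by apply/matrixP => i j; rewrite !ord1 !mxE eqxx conjC1.
  by move=> u; rewrite mulmx1 mxE big_ord1 !mxE mulrC mul_conjC_ge0.
by have := psd_conj (dagger v) psd1; rewrite daggerK mulmx1.
Qed.

Lemma mxtrace_mul_rank1 n (K : 'M[C]_n) (v : 'cV[C]_n) c :
  \tr (K *m (c *: (v *m dagger v))) = c * (dagger v *m K *m v) 0 0.
Proof.
rewrite -scalemxAr mxtraceZ mulmxA mxtrace_mulC mulmxA.
by rewrite /mxtrace big_ord1.
Qed.

End Positivity.

Section PauliMeasurements.
Variable C : numClosedFieldType.

Lemma sqrCi_mul : 'i * 'i = -1 :> C.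
Proof. by rewrite -expr2 sqrCi. Qed.

Lemma proj_ofB (O : 'M[C]_2) : proj_of O false - proj_of O true = O.
Proof.
apply/matrixP => i j; rewrite /proj_of !mxE expr0 expr1.
by move: ((i == j)%:R : C) => e; field.
Qed.

Lemma proj_ofD (O : 'M[C]_2) : proj_of O false + proj_of O true = 1%:M.
Proof.
apply/matrixP => i j; rewrite /proj_of !mxE expr0 expr1.
by move: ((i == j)%:R : C) => e; field.
Qed.

Lemma MB_MA : MB C = MA C.
Proof. by []. Qed.

Definition pauli_eigvec (x a : bool) : 'cV[C]_2 :=
  \col_i (if i == 0 then 1 else (if x then 'i else 1) * (-1) ^+ a).

Lemma MA_rank1 a x :
  MA C a x = 2^-1 *: (pauli_eigvec x a *m dagger (pauli_eigvec x a)).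
Proof.
apply/matrixP => i j; rewrite /MA /proj_of !mxE big_ord1 !mxE.
have ord2 (k : 'I_2) : k = 0 \/ k = 1 by case: k => [[|[|]]] // ?; [left|right]; apply: val_inj.
case: (ord2 i) => ->; case: (ord2 j) => ->; case: x; case: a;
  rewrite /obsA /sigma_y /sigma_x !mxE /= ?expr0 ?expr1 ?rmorphM ?rmorphN /= ?conjCi ?conjC1;
  ring: sqrCi_mul.
Qed.

Lemma psd_kron_rank1 m n (w : 'cV[C]_m) (N : 'M[C]_n) :
  psd N -> psd (kron (w *m dagger w) N).
Proof.
(* W is w (x) 1. *)
pose W := \matrix_(k, j) (w (tens_idx k).1 0 * ((tens_idx k).2 == j)%:R) : 'M[C]_(m * n, n).
suff -> : kron (w *m dagger w) N = dagger (dagger W) *m N *m dagger W.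
  exact: psd_conj.
rewrite daggerK; apply/matrixP => k l.
case/mxvec_indexP: k => i j; case/mxvec_indexP: l => i' j'.
rewrite kronE !mxE big_ord1 !mxE (bigD1 j') //= big1 => [|p /negbTE pj]; last first.
  by rewrite !mxE tens_idx_mxvec /= (eq_sym j') pj mulr0n mulr0 rmorph0 mulr0.
rewrite !mxE tens_idx_mxvec /= eqxx mulr1n mulr1 addr0 (bigD1 j) //= big1 => [|p /negbTE pj].
  by rewrite !mxE tens_idx_mxvec /= eqxx mulr1n mulr1 addr0 mulrAC.
by rewrite !mxE tens_idx_mxvec /= (eq_sym j) pj mulr0n mulr0 mul0r.
Qed.

Lemma kron_MA_mul_ge0 d a x (N : 'M[C]_d) (T : 'M[C]_(2 * d)) :
  psd N -> psd T -> 0 <= \tr (kron (MA C a x) N *m T).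
Proof.
move=> pN pT; apply: mxtrace_psd_mul_ge0 pT.
by rewrite MA_rank1 kronZl; apply: psd_scale (psd_kron_rank1 _ pN); rewrite invr_ge0 ler0n.
Qed.

Lemma kron_MA_povm_sum d x (N : bool -> 'M[C]_d) (T : 'M[C]_(2 * d)) :
  is_povm N -> \tr T = 1 ->
  \tr (kron (MA C false x) (N false) *m T) + \tr (kron (MA C false x) (N true) *m T)
  + \tr (kron (MA C true x) (N false) *m T) + \tr (kron (MA C true x) (N true) *m T) = 1.
Proof.
move=> [_ sumN] trT; rewrite -!mxtraceD -!mulmxDl -kronDr -addrA -kronDr -kronDl.
by rewrite proj_ofD sumN kron1 mul1mx.
Qed.

End PauliMeasurements.

Definition corr (V : zmodType) (p : bool -> V) : V := p false - p true.

Section Correlators.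
Variable R : numDomainType.
Implicit Types (g h : R).

Lemma corr_bound (p : bool -> R) :
  (forall c, 0 <= p c) -> p false + p true = 1 -> -1 <= corr p <= 1.
Proof.
move=> p_ge0 p1; rewrite /corr -p1 opprD lerD2r lerD2l.
by rewrite !(le_trans _ (p_ge0 _)) ?oppr_le0.
Qed.

Lemma corr2_bound (q : bool -> bool -> R) :
  (forall b c, 0 <= q b c) -> q false false + q false true + q true false + q true true = 1 ->
  -1 <= corr (fun b => corr (q b)) <= 1.
Proof.
move=> q_ge0 q1.
have -> : corr (fun b => corr (q b)) =
    corr (fun b => if b then q false true + q true false else q false false + q true true).
  by rewrite /corr; ring.
by apply: corr_bound => [[]|]; rewrite ?addr_ge0 // -q1; ring.
Qed.

Lemma gerN1_real g : -1 <= g -> g \is Num.real.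
Proof.
move=> g_ge; rewrite -[g](addrK 1) rpredB ?real1 ?ger0_real //.
by rewrite -[1]opprK subr_ge0.
Qed.

Lemma sqr_le1 g : -1 <= g <= 1 -> g ^+ 2 <= 1.
Proof.
case/andP => g_ge g_le; rewrite -subr_ge0.
have -> : 1 - g ^+ 2 = (1 - g) * (g - -1) by ring.
by apply: mulr_ge0; rewrite subr_ge0.
Qed.

Lemma sqr_addr_subr_le4 g h : -1 <= g <= 1 -> -1 <= h <= 1 ->
  (g + h) ^+ 2 <= 4 /\ (g - h) ^+ 2 <= 4.
Proof.
case/andP => g_ge g_le /andP [h_ge h_le]; rewrite -!(subr_ge0 _ 4).
have -> : 4 - (g + h) ^+ 2 = ((1 - g) + (1 - h)) * ((g - -1) + (h - -1)) by ring.
have -> : 4 - (g - h) ^+ 2 = ((1 - g) + (h - -1)) * ((g - -1) + (1 - h)) by ring.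
by split; apply: mulr_ge0; apply: addr_ge0; rewrite subr_ge0.
Qed.

End Correlators.

Section MerminFunctional.
Variable C : numClosedFieldType.
Local Notation behaviour := (bool -> bool -> bool -> bool -> bool -> bool -> C).
Implicit Types (f g : behaviour).

Definition corr3 f x y z : C :=
  corr (fun a => corr (fun b => corr (fun c => f a b c x y z))).

Definition mermin_functional f : C :=
  corr3 f false false true + corr3 f false true false + corr3 f true false false
  - corr3 f true true true.

Lemma mermin_functional_ext f g :
  (forall a b c x y z, f a b c x y z = g a b c x y z) ->
  mermin_functional f = mermin_functional g.
Proof. by move=> fg; rewrite /mermin_functional /corr3 /corr !fg. Qed.

Lemma mermin_functionalD f g :
  mermin_functional (fun a b c x y z => f a b c x y z + g a b c x y z)
  = mermin_functional f + mermin_functional g.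
Proof. by rewrite /mermin_functional /corr3 /corr; ring. Qed.

Lemma mermin_functionalZ k f :
  mermin_functional (fun a b c x y z => k * f a b c x y z) = k * mermin_functional f.
Proof. by rewrite /mermin_functional /corr3 /corr; ring. Qed.

Lemma mermin_functional_sum n (w : 'I_n -> C) (h : 'I_n -> behaviour) :
  mermin_functional (fun a b c x y z => \sum_l w l * h l a b c x y z)
  = \sum_l w l * mermin_functional (h l).
Proof.
elim: n w h => [|n IH] w h.
  rewrite big_ord0 (mermin_functional_ext (g := fun _ _ _ _ _ _ => 0 * 0)).
    by rewrite mermin_functionalZ mul0r.
  by move=> *; rewrite big_ord0 mul0r.
rewrite big_ord_recr /= -IH -mermin_functionalZ -mermin_functionalD.
by apply: mermin_functional_ext => *; rewrite big_ord_recr.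
Qed.

Lemma mermin_functional_swapAB f :
  mermin_functional (fun a b c x y z => f b a c y x z) = mermin_functional f.
Proof. by rewrite /mermin_functional /corr3 /corr; ring. Qed.

Lemma mermin_functional_mermin V : mermin_functional (mermin V) = 4 * V.
Proof. by rewrite /mermin_functional /corr3 /corr /mermin /= ?expr0 ?expr1; field. Qed.

Lemma mermin_functional_AB_C (E : bool -> bool -> bool -> bool -> C) (G : bool -> bool -> C) :
  let E2 x y := corr (fun a => corr (fun b => E a b x y)) in
  let G1 z := corr (G ^~ z) in
  mermin_functional (fun a b c x y z => E a b x y * G c z)
  = E2 false false * G1 true + E2 false true * G1 false + E2 true false * G1 false
    - E2 true true * G1 true.
Proof. by rewrite /mermin_functional /corr3 /corr /=; ring. Qed.

Lemma mermin_functional_A_BC (E : bool -> bool -> C) (G : bool -> bool -> bool -> bool -> C) :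
  let E1 x := corr (E ^~ x) in
  let G2 y z := corr (fun b => corr (fun c => G b c y z)) in
  mermin_functional (fun a b c x y z => E a x * G b c y z)
  = E1 false * (G2 false true + G2 true false) + E1 true * (G2 false false - G2 true true).
Proof. by rewrite /mermin_functional /corr3 /corr /=; ring. Qed.

End MerminFunctional.

Section LocalBounds.
Variable C : numClosedFieldType.
Implicit Types (u v : C).

Lemma corr_proj (F : 'M[C]_2 -> C) (O : 'M[C]_2) :
  {morph F : A B / A - B} -> corr (fun a => F (proj_of O a)) = F O.
Proof. by move=> FB; rewrite /corr -FB proj_ofB. Qed.

Lemma corr2_kron_MA_MB (R : 'M[C]_(2 * 2)) x y :
  corr (fun a => corr (fun b => \tr (kron (MA C a x) (MB C b y) *m R)))
  = \tr (kron (obsA C x) (obsB C y) *m R).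
Proof.
have inner M : corr (fun b => \tr (kron M (MB C b y) *m R)) = \tr (kron M (obsB C y) *m R).
  by apply: (corr_proj (F := fun N => \tr (kron M N *m R))) => A B; rewrite kronBr mulmxBl linearB.
rewrite {1}/corr !inner.
apply: (corr_proj (F := fun M => \tr (kron M (obsB C y) *m R))) => A B.
by rewrite kronBl mulmxBl linearB.
Qed.

Lemma mxtrace_kron_pauli_mermin (R : 'M[C]_(2 * 2)) g0 g1 :
  \tr (kron (obsA C false) (obsB C false) *m R) * g1
  + \tr (kron (obsA C false) (obsB C true) *m R) * g0
  + \tr (kron (obsA C true) (obsB C false) *m R) * g0
  - \tr (kron (obsA C true) (obsB C true) *m R) * g1
  = (2 * g1 + 'i * (2 * g0)) * R (mxvec_index 0 0) (mxvec_index 1 1)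
    + (2 * g1 - 'i * (2 * g0)) * R (mxvec_index 1 1) (mxvec_index 0 0).
Proof.
rewrite !mxtrace_kron_mul !sum_ord2 /obsA /obsB /sigma_x /sigma_y !mxE /=.
ring: (sqrCi_mul C).
Qed.

Lemma mermin_functional_AB_C_le (R : 'M[C]_(2 * 2)) (P : bool -> bool -> C) :
  is_state R -> is_cond_distr P ->
  mermin_functional (fun a b c x y z => \tr (kron (MA C a x) (MB C b y) *m R) * P c z)
  <= 2 * sqrtC 2.
Proof.
move=> sR [P_ge0 P1].
rewrite mermin_functional_AB_C /= !corr2_kron_MA_MB mxtrace_kron_pauli_mermin.
have g_bound z : -1 <= corr (P ^~ z) <= 1 by apply: corr_bound.
have g_real z := gerN1_real (proj1 (andP (g_bound z))).
rewrite -conjC_rect ?realM ?realn ?g_real //.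
apply: state_offdiag_le => //; first by rewrite mxvec_index_eq.
rewrite conjC_rect ?realM ?realn ?g_real //.
set g0 := corr (P ^~ false); set g1 := corr (P ^~ true).
rewrite [_ * _](_ : _ = 4 * (g1 ^+ 2 + g0 ^+ 2)); last by ring: (sqrCi_mul C).
apply: (le_trans (ler_wpM2l (ler0n _ 4) (lerD (sqr_le1 (g_bound _)) (sqr_le1 (g_bound _))))).
by rewrite -[1 + 1]/(2%:R) -natrM.
Qed.

Lemma qubit_pauli_le (R : 'M[C]_2) u v :
  is_state R -> u \is Num.real -> v \is Num.real -> u ^+ 2 + v ^+ 2 <= 8 ->
  \tr (sigma_x C *m R) * u + \tr (sigma_y C *m R) * v <= 2 * sqrtC 2.
Proof.
move=> sR ur vr uv8.
rewrite [X in X <= _](_ : _ = (u + 'i * v) * R 0 1 + (u + 'i * v)^* * R 1 0).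
  apply: state_offdiag_le => //; rewrite conjC_rect //.
  by rewrite [_ * _](_ : _ = u ^+ 2 + v ^+ 2) //; ring: (sqrCi_mul C).
rewrite conjC_rect // !mxtrace_mulE !sum_ord2 /sigma_x /sigma_y !mxE /=.
ring: (sqrCi_mul C).
Qed.

Lemma mermin_functional_A_BC_le d (R : 'M[C]_2) (T : 'M[C]_(2 * d)) (N : bool -> bool -> 'M[C]_d) :
  is_state R -> is_state T -> (forall z, is_povm (N ^~ z)) ->
  mermin_functional (fun a b c x y z => \tr (MA C a x *m R) * \tr (kron (MB C b y) (N c z) *m T))
  <= 2 * sqrtC 2.
Proof.
move=> sR [pT trT] N_povm; rewrite mermin_functional_A_BC /=.
have corrA x : corr (fun a => \tr (MA C a x *m R)) = \tr (obsA C x *m R).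
  by apply: (corr_proj (F := fun M => \tr (M *m R))) => A B; rewrite mulmxBl linearB.
have G_bound y z : -1 <= corr (fun b => corr (fun c => \tr (kron (MB C b y) (N c z) *m T))) <= 1.
  rewrite MB_MA; apply: corr2_bound => [b c|]; first by apply: kron_MA_mul_ge0 pT; case: (N_povm z).
  exact: kron_MA_povm_sum (N_povm z) trT.
have G_real y z := gerN1_real (proj1 (andP (G_bound y z))).
rewrite !corrA; apply: qubit_pauli_le => //; [exact: rpredD | exact: rpredB |].
have [uB _] := sqr_addr_subr_le4 (G_bound false true) (G_bound true false).
have [_ vB] := sqr_addr_subr_le4 (G_bound false false) (G_bound true true).
by apply: (le_trans (lerD uB vB)); rewrite -natrD.
Qed.

Lemma mermin_functional_B_AC_le d (R : 'M[C]_2) (T : 'M[C]_(2 * d)) (N : bool -> bool -> 'M[C]_d) :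
  is_state R -> is_state T -> (forall z, is_povm (N ^~ z)) ->
  mermin_functional (fun a b c x y z => \tr (MB C b y *m R) * \tr (kron (MA C a x) (N c z) *m T))
  <= 2 * sqrtC 2.
Proof. by rewrite -mermin_functional_swapAB MB_MA; apply: mermin_functional_A_BC_le. Qed.

End LocalBounds.

Lemma StLHS_mermin_le (C : numClosedFieldType)
    (P : bool -> bool -> bool -> bool -> bool -> bool -> C) :
  StLHS P -> mermin_functional P <= 2 * sqrtC 2.
Proof.
move=> [n1] [n2] [n3] [r] [rhoAB] [PC] [p] [rhoA] [dB] [tauBC] [NB] [q] [rhoB] [dA] [tauAC] [NA].
move=> [[r_ge0 p_ge0 q_ge0 w1] [h1 h2 h3 hP]].
pose T1 l a b c x y z := \tr (kron (MA C a x) (MB C b y) *m rhoAB l) * PC l c z.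
pose T2 l a b c x y z :=
  \tr (MA C a x *m rhoA l) * \tr (kron (MB C b y) (NB l c z) *m tauBC l).
pose T3 l a b c x y z :=
  \tr (MB C b y *m rhoB l) * \tr (kron (MA C a x) (NA l c z) *m tauAC l).
have -> : mermin_functional P = mermin_functional (fun a b c x y z =>
    \sum_l r l * T1 l a b c x y z + \sum_l p l * T2 l a b c x y z
    + \sum_l q l * T3 l a b c x y z).
  apply: mermin_functional_ext => *; rewrite hP.
  by congr (_ + _ + _); apply: eq_bigr => l _; rewrite mulrA.
rewrite !mermin_functionalD !mermin_functional_sum.
apply: (@le_trans _ _ ((\sum_l r l + \sum_l p l + \sum_l q l) * (2 * sqrtC 2))).
  rewrite 2!mulrDl !mulr_suml.
  apply: lerD; first apply: lerD; apply: ler_sum => l _; apply: ler_wpM2l => //.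
  - by case: (h1 l) => *; apply: mermin_functional_AB_C_le.
  - by case: (h2 l) => *; apply: mermin_functional_A_BC_le.
  - by case: (h3 l) => *; apply: mermin_functional_B_AC_le.
by rewrite w1 mul1r.
Qed.

Section MerminModel.
Variable C : numClosedFieldType.
Local Notation s b := ((-1) ^+ b : C).

Definition phase_vec (e : C) : 'cV[C]_(2 * 2) :=
  delta_mx (mxvec_index 0 0) 0 + e *: delta_mx (mxvec_index 1 1) 0.

Definition phase_state (e : C) : 'M[C]_(2 * 2) := 2^-1 *: (phase_vec e *m dagger (phase_vec e)).

Lemma mxtrace_mul_phase_state (K : 'M[C]_(2 * 2)) e :
  \tr (K *m phase_state e) =
  2^-1 * (K (mxvec_index 0 0) (mxvec_index 0 0) + e * K (mxvec_index 0 0) (mxvec_index 1 1)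
          + e^* * K (mxvec_index 1 1) (mxvec_index 0 0)
          + e^* * e * K (mxvec_index 1 1) (mxvec_index 1 1)).
Proof.
rewrite mxtrace_mul_rank1 /phase_vec -[delta_mx (mxvec_index 0 0) 0]scale1r quad_delta2.
by rewrite conjC1; ring.
Qed.

Lemma phase_state_is_state e : e^* * e = 1 -> is_state (phase_state e).
Proof.
move=> e1; split; first by apply: psd_scale (psd_rank1 _); rewrite invr_ge0 ler0n.
rewrite -[phase_state e]mul1mx mxtrace_mul_phase_state !mxE !mxvec_index_eq /= e1.
by field.
Qed.

Definition sgn1 (l : 'I_4) : C := if (l < 2)%N then 1 else -1.
Definition sgn2 (l : 'I_4) : C := if odd l then -1 else 1.

Definition model_phase (l : 'I_4) : C := sgn1 l / sqrtC 2 + 'i * (sgn2 l / sqrtC 2).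

Definition model_response (V : C) (l : 'I_4) (c z : bool) : C :=
  (1 + s c * (V * sqrtC 2) * (if z then sgn1 l else sgn2 l)) / 2.

Lemma sum_ord4 (F : 'I_4 -> C) :
  \sum_(l < 4) F l = F 0 + F 1 + F 2%:R + F 3%:R.
Proof.
by rewrite !big_ord_recr big_ord0 /= add0r; congr (F _ + F _ + F _ + F _); apply: val_inj.
Qed.

Lemma conj_model_phase l : (model_phase l)^* = sgn1 l / sqrtC 2 - 'i * (sgn2 l / sqrtC 2).
Proof.
have r_real : ((sqrtC 2)^-1 : C) \is Num.real by rewrite rpredV ger0_real ?sqrtC_ge0 ?ler0n.
by rewrite conjC_rect // realM // /sgn1 /sgn2; [case: (_ < _)%N | case: (odd _)];
  rewrite ?rpredN ?real1.
Qed.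

Lemma model_phase_unit l : (model_phase l)^* * model_phase l = 1.
Proof.
have kk : sqrtC 2 * sqrtC 2 = 2 :> C by rewrite -expr2 sqrtCK.
rewrite conj_model_phase /model_phase /sgn1 /sgn2.
by case: (l < 2)%N; case: (odd l); field: (sqrCi_mul C) kk; rewrite sqrtC_eq0 pnatr_eq0.
Qed.

Lemma mermin_model_eq V a b c x y z :
  mermin V a b c x y z =
  \sum_(l < 4) 4^-1 * \tr (kron (MA C a x) (MB C b y) *m phase_state (model_phase l))
                   * model_response V l c z.
Proof.
have k0 : sqrtC 2 != 0 :> C by rewrite sqrtC_eq0 pnatr_eq0.
have kk : sqrtC 2 * sqrtC 2 = 2 :> C by rewrite -expr2 sqrtCK.
rewrite sum_ord4 !mxtrace_mul_phase_state !conj_model_phase !kronE.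
rewrite /model_response /model_phase /sgn1 /sgn2 /mermin !signr_addb /=.
rewrite /MA /MB /proj_of /obsA /obsB /sigma_x /sigma_y.
case: x; case: y; case: z; rewrite !mxE /= ?expr0 ?expr1;
  move: (s a) (s b) (s c) => sa sb sc; field: (sqrCi_mul C) kk.
all: exact: k0.
Qed.

Lemma model_response_distr V l : 0 <= V * sqrtC 2 <= 1 -> is_cond_distr (model_response V l).
Proof.
case/andP=> t_ge0 t_le1; split=> [c z|z]; last by rewrite /model_response expr0 expr1; field.
rewrite /model_response /sgn1 /sgn2 divr_ge0 ?ler0n //.
by case: c; case: z; case: (l < 2)%N; case: (odd l);
  rewrite ?expr0 ?expr1 ?mul1r ?mulr1 ?mulN1r ?mulrN1 ?opprK ?subr_ge0 ?addr_ge0.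
Qed.

Lemma mermin_StLHS (V : C) : 0 <= V * sqrtC 2 <= 1 -> StLHS (mermin V).
Proof.
move=> t_bound.
exists 4%N, 0%N, 0%N, (fun _ => 4^-1), (fun l => phase_state (model_phase l)),
  (model_response V), (fun _ => 0), (fun _ => 0), (fun _ => 1%N), (fun _ => 0),
  (fun _ _ _ => 0), (fun _ => 0), (fun _ => 0), (fun _ => 1%N), (fun _ => 0), (fun _ _ _ => 0).
split.
  split=> // [l|]; first by rewrite invr_ge0 ler0n.
  by rewrite !big_ord0 !addr0 sum_ord4; field.
split=> [l|[] //|[] //|a b c x y z].
  by split; [exact: phase_state_is_state (model_phase_unit l) | exact: model_response_distr].
by rewrite !big_ord0 !addr0; exact: mermin_model_eq.
Qed.

End MerminModel.

Theorem proposition5 (C : numClosedFieldType) (V : C) :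
  0 < V -> V <= 1 ->
  (genuine_1SDI_steering (mermin V) <-> 1 / sqrtC 2 < V).
Proof.
move=> V_gt0 _; have r_gt0 : 0 < sqrtC 2 :> C by rewrite sqrtC_gt0 ltr0n.
rewrite ltr_pdivrMr // ?mul1r; split => [noLHS | Vr_gt1 LHS].
  rewrite real_ltNge ?realM ?gtr0_real ?real1 //; apply/negP => Vr_le1.
  by apply: noLHS; apply: mermin_StLHS; rewrite Vr_le1 mulr_ge0 // ltW.
suff lt : 2 * sqrtC 2 < 4 * V.
  have := StLHS_mermin_le LHS; rewrite mermin_functional_mermin.
  by move=> /(lt_le_trans lt); rewrite ltxx.
rewrite -(ltr_pM2r r_gt0) -!mulrA -expr2 sqrtCK (_ : 2 * 2 = 4 * 1) ?ltr_pM2l ?ltr0n //.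
by rewrite mulr1 -natrM.
Qed.
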